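(* Fix a full-support skill distribution $p\in\Delta(\Theta)$ and two full-support perceptions $q,q'\in\Delta(\Theta)$. (a) If $q'\succsim_{LR} q$, then for every signal structure $\langle S,\pi\rangle$ and every monotone firm $A\subset\mathcal{A}_M$, $$W_A(p,q',\langle S,\pi\rangle)\ \ge\ W_A(p,q,\langle S,\pi\rangle).$$ (b) If $q'\not\succsim_{LR} q$, then there exists a signal structure $\langle S,\pi\rangle$ such that for every monotone firm $A\subset\mathcal{A}_M$, $$W_A(p,q',\langle S,\pi\rangle)\ <\ W_A(p,q,\langle S,\pi\rangle).$$
   Context: Let $\Theta\subset\mathbb{R}$ be a finite set of skill types with $|\Theta|\ge 2$. A task is a vector $a\in\mathcal{A}:=\mathbb{R}^\Theta$. A firm is a non-empty finite set $A\subset\mathcal{A}$. The firm is monotone if $A\subset\mathcal{A}_M:=\{a\in\mathbb{R}^\Theta: a(\theta')>a(\theta)\text{ whenever }\theta'>\theta\}$. A signal structure $\langle S,\pi\rangle$ consists of a non-empty finite set $S$ and a map $\pi:S\times\Theta\to[0,1]$ with $\sum_{s\in S}\pi(s|\theta)=1$ for each $\theta$, such that every $s\in S$ has $\pi(s|\theta)>0$ for some $\theta$. The true skill distribution $p$ and the perception $q$ are full-support elements of $\Delta(\Theta)$. The posterior is $q_{\langle S,\pi\rangle}(\theta|s):=q(\theta)\pi(s|\theta)/\sum_{\theta'}q(\theta')\pi(s|\theta')$. Pay of a worker with signal $s$ is $w_A(s,q,\langle S,\pi\rangle):=\max_{a\in A}\sum_{\theta}q_{\langle S,\pi\rangle}(\theta|s)a(\theta)$.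 Average pay is $W_A(p,q,\langle S,\pi\rangle):=\sum_{\theta}p(\theta)\sum_{s\in S}\pi(s|\theta)w_A(s,q,\langle S,\pi\rangle)$. Likelihood-ratio order: $q'\succsim_{LR}q$ means $q(\theta)q'(\theta')\ge q(\theta')q'(\theta)$ whenever $\theta'>\theta$. *)

From mathcomp Require Import all_boot all_order all_algebra.
From mathcomp Require Import reals.
From Stdlib Require List.
Set Implicit Arguments. Unset Strict Implicit. Unset Printing Implicit Defensive.
Import Order.TTheory GRing.Theory Num.Theory.
Local Open Scope ring_scope.

(* Skill types: a finite type T together with an injective embedding
   th : T -> R; the order on skill types is the order of their real values. *)

Section Defs.
Variables (R : realType) (T : finType) (th : T -> R).

Definition full_support_dist (p : T -> R) : Prop :=
  (forall t, 0 < p t) /\ \sum_(t : T) p t = 1.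

Definition signal_structure (S : finType) (pi : S -> T -> R) : Prop :=
  [/\ forall s t, 0 <= pi s t,
      forall t, \sum_(s : S) pi s t = 1
    & forall s, exists t, 0 < pi s t].

(* monotone task / firm (a firm is a non-empty finite set of tasks,
   represented by a non-empty list of tasks) *)
Definition monotone_task (a : T -> R) : Prop :=
  forall t t', th t < th t' -> a t < a t'.

Definition monotone_firm (A : seq (T -> R)) : Prop :=
  A <> [::] /\ forall a, List.In a A -> monotone_task a.

Definition LR_ge (q' q : T -> R) : Prop :=
  forall t t', th t < th t' -> q t * q' t' >= q t' * q' t.

Variables (S : finType) (pi : S -> T -> R).

Definition posterior (q : T -> R) (s : S) (t : T) : R :=
  q t * pi s t / \sum_(t' : T) q t' * pi s t'.

Definition expected_value (q : T -> R) (s : S) (a : T -> R) : R :=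
  \sum_(t : T) posterior q s t * a t.

Definition pay (A : seq (T -> R)) (q : T -> R) (s : S) : R :=
  match A with
  | [::] => 0
  | a0 :: A' => \big[Num.max/expected_value q s a0]_(a <- A') expected_value q s a
  end.

Definition avg_pay (A : seq (T -> R)) (p q : T -> R) : R :=
  \sum_(t : T) p t * \sum_(s : S) pi s t * pay A q s.

End Defs.

From mathcomp Require Import all_boot all_order all_algebra.
From mathcomp Require Import reals.
From mathcomp Require Import ring lra.
Import Order.TTheory GRing.Theory Num.Theory.
Set Implicit Arguments. Unset Strict Implicit. Unset Printing Implicit Defensive.
Local Open Scope ring_scope.

(* (a) After clearing denominators, comparing the posterior expected values of a
   task a under q' and under q amounts to the sign of a double sum which, once
   symmetrized in the two summation indices, has the terms
   w_t w_u (q'_t q_u - q_t q'_u) (a_t - a_u).  Under q' >=_LR q these are all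
   nonnegative for a monotone task, so every task is valued at least as much
   under q', and so are the maximum over a firm and its average.
   (b) If q' >=_LR q fails at a pair of types t < t', pool exactly these two
   types into common signals and let all other types reveal themselves.
   Revealing signals are valued identically under both perceptions, while at the
   pooled signals q' puts relatively more weight on the lower type t, so every
   monotone task, hence every monotone firm, is valued strictly less. *)

Lemma cross_sum_symmetrize (R : comNzRingType) (T : finType) (w a q q' : T -> R) :
  ((\sum_t q' t * w t * a t) * (\sum_u q u * w u)
     - (\sum_t q t * w t * a t) * (\sum_u q' u * w u)) *+ 2
  = \sum_t \sum_u w t * w u * (q' t * q u - q t * q' u) * (a t - a u).
Proof.
pose c t u := w t * w u * (q' t * q u - q t * q' u).
have -> : (\sum_t q' t * w t * a t) * (\sum_u q u * w u)
            - (\sum_t q t * w t * a t) * (\sum_u q' u * w u)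
          = \sum_t \sum_u c t u * a t.
  rewrite !mulr_suml -sumrB; apply: eq_bigr => t _.
  by rewrite !mulr_sumr -sumrB; apply: eq_bigr => u _; rewrite /c; ring.
rewrite mulr2n [X in _ + X]exchange_big -big_split; apply: eq_bigr => t _ /=.
by rewrite -big_split; apply: eq_bigr => u _; rewrite /c /=; ring.
Qed.

Lemma two_point_mean_lt (R : realFieldType) (x1 x2 y1 y2 a1 a2 : R) :
  0 < x1 -> 0 < x2 -> 0 < y1 -> 0 < y2 -> a1 < a2 -> x1 * y2 < x2 * y1 ->
  (y1 * a1 + y2 * a2) / (y1 + y2) < (x1 * a1 + x2 * a2) / (x1 + x2).
Proof.
move=> x1_gt0 x2_gt0 y1_gt0 y2_gt0 lt_a lt_xy.
rewrite ltr_pdivrMr ?addr_gt0 // mulrAC ltr_pdivlMr ?addr_gt0 // -subr_gt0.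
have -> : (x1 * a1 + x2 * a2) * (y1 + y2) - (y1 * a1 + y2 * a2) * (x1 + x2)
        = (a2 - a1) * (x2 * y1 - x1 * y2) by ring.
by apply: mulr_gt0; rewrite subr_gt0.
Qed.

Lemma lt_max2 d (X : orderType d) (x1 x2 y1 y2 : X) :
  (x1 < y1 -> x2 < y2 -> Order.max x1 x2 < Order.max y1 y2)%O.
Proof. by move=> lt1 lt2; rewrite gt_max !lt_max lt1 lt2 orbT. Qed.

Section BigMaxRel.
Variables (d : Order.disp_t) (Y : orderType d) (X : Type) (K : Y -> Y -> Prop).
Hypothesis K_max : forall x1 x2 y1 y2,
  K x1 y1 -> K x2 y2 -> K (Order.max x1 x2) (Order.max y1 y2).

Lemma big_max_rel (l : seq X) (F G : X -> Y) x y :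
  K x y -> (forall a, List.In a l -> K (F a) (G a)) ->
  K (\big[Order.max/x]_(a <- l) F a) (\big[Order.max/y]_(a <- l) G a).
Proof.
elim: l => [|b l IHl] Kxy KFG; first by rewrite !big_nil.
rewrite !big_cons; apply: K_max; first by apply: KFG; left.
by apply: IHl => // a la; apply: KFG; right.
Qed.

End BigMaxRel.

Lemma not_LR_geP (R : realType) (T : finType) (th q q' : T -> R) :
  ~ LR_ge th q' q -> exists t t', th t < th t' /\ q t * q' t' < q t' * q' t.
Proof.
move=> nLR.
have : ~~ [forall t, forall t', (th t < th t') ==> (q t' * q' t <= q t * q' t')].
  apply/negP => /forallP LRq; apply: nLR => t t' lt_tt'.
  exact: implyP (forallP (LRq t) t') lt_tt'.
case/forallPn => t /forallPn [t']; rewrite negb_imply -ltNge => /andP [lt_tt' lt_q].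
by exists t, t'.
Qed.

Lemma LR_monotone_cross_ge0 (R : realType) (T : finType) (th q q' a : T -> R) :
  injective th -> LR_ge th q' q -> monotone_task th a ->
  forall t u, 0 <= (q' t * q u - q t * q' u) * (a t - a u).
Proof.
move=> th_inj LRq a_mono t u; case: (ltgtP (th t) (th u)) => [lt_tu|lt_ut|/th_inj ->].
- apply: mulr_le0; first by have := LRq _ _ lt_tu; lra.
  by have := a_mono _ _ lt_tu; lra.
- apply: mulr_ge0; first by have := LRq _ _ lt_ut; lra.
  by have := a_mono _ _ lt_ut; lra.
- by rewrite subrr mulr0.
Qed.

Section ExpectedValue.
Variables (R : realType) (T S : finType) (pi : S -> T -> R).
Hypothesis pi_signal : signal_structure pi.

Lemma expected_valueE (q a : T -> R) s :
  expected_value pi q s a = (\sum_t q t * pi s t * a t) / \sum_t q t * pi s t.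
Proof. by rewrite /expected_value /posterior mulr_suml; apply: eq_bigr => t _; ring. Qed.

Lemma signal_weight_gt0 (q : T -> R) s : (forall t, 0 < q t) -> 0 < \sum_t q t * pi s t.
Proof.
case: pi_signal => pi_ge0 _ pi_supp q_gt0; have [t pi_st] := pi_supp s.
rewrite (bigD1 t) //=; apply: ltr_wpDr; last exact: mulr_gt0.
by apply: sumr_ge0 => u _; apply: mulr_ge0; [apply: ltW|].
Qed.

Lemma expected_value_LR_le (th q q' a : T -> R) s :
  injective th -> (forall t, 0 < q t) -> (forall t, 0 < q' t) ->
  LR_ge th q' q -> monotone_task th a ->
  expected_value pi q s a <= expected_value pi q' s a.
Proof.
move=> th_inj q_gt0 q'_gt0 LRq a_mono; case: (pi_signal) => pi_ge0 _ _.
rewrite !expected_valueE ler_pdivrMr ?signal_weight_gt0 // mulrAC.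
rewrite ler_pdivlMr ?signal_weight_gt0 // -subr_ge0 -(pmulrn_lge0 _ (ltn0Sn 1)).
rewrite cross_sum_symmetrize; apply: sumr_ge0 => t _; apply: sumr_ge0 => u _.
rewrite -mulrA; apply: mulr_ge0; first exact: mulr_ge0 (pi_ge0 s t) (pi_ge0 s u).
exact: LR_monotone_cross_ge0 th_inj LRq a_mono t u.
Qed.

End ExpectedValue.

Section Pay.
Variables (R : realType) (T S : finType) (pi : S -> T -> R).

Lemma pay_rel (K : R -> R -> Prop) A q q' s :
  (forall x1 x2 y1 y2, K x1 y1 -> K x2 y2 -> K (Num.max x1 x2) (Num.max y1 y2)) ->
  A <> [::] ->
  (forall a, List.In a A -> K (expected_value pi q s a) (expected_value pi q' s a)) ->
  K (pay pi A q s) (pay pi A q' s).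
Proof.
case: A => [|a0 A] // K_max _ KA /=.
by apply: big_max_rel => [//||a aA]; apply: KA; [left | right].
Qed.

Lemma pay_le A q q' s : A <> [::] ->
  (forall a, List.In a A -> expected_value pi q s a <= expected_value pi q' s a) ->
  pay pi A q s <= pay pi A q' s.
Proof. by apply: (pay_rel (K := fun x y => x <= y)) => x1 x2 y1 y2; apply: le_max2. Qed.

Lemma pay_lt A q q' s : A <> [::] ->
  (forall a, List.In a A -> expected_value pi q s a < expected_value pi q' s a) ->
  pay pi A q s < pay pi A q' s.
Proof. by apply: (pay_rel (K := fun x y => x < y)) => x1 x2 y1 y2; apply: lt_max2. Qed.

Lemma avg_pay_le A p q q' :
  (forall t, 0 <= p t) -> (forall s t, 0 <= pi s t) ->
  (forall s, pay pi A q s <= pay pi A q' s) ->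
  avg_pay pi A p q <= avg_pay pi A p q'.
Proof.
move=> p_ge0 pi_ge0 le_pay; apply: ler_sum => t _; apply: ler_wpM2l => //.
by apply: ler_sum => s _; apply: ler_wpM2l.
Qed.

Lemma avg_pay_lt A p q q' s0 t0 :
  (forall t, 0 <= p t) -> (forall s t, 0 <= pi s t) ->
  (forall s, pay pi A q s <= pay pi A q' s) ->
  0 < p t0 -> 0 < pi s0 t0 -> pay pi A q s0 < pay pi A q' s0 ->
  avg_pay pi A p q < avg_pay pi A p q'.
Proof.
move=> p_ge0 pi_ge0 le_pay p_t0 pi_s0t0 lt_pay_s0.
rewrite /avg_pay (bigD1 t0) //= [ltRHS](bigD1 t0) //=.
apply: ltr_leD; last first.
  apply: ler_sum => t _; apply: ler_wpM2l => //.
  by apply: ler_sum => s _; apply: ler_wpM2l.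
rewrite ltr_pM2l // (bigD1 s0) //= [ltRHS](bigD1 s0) //=.
apply: ltr_leD; first by rewrite ltr_pM2l.
by apply: ler_sum => s _; apply: ler_wpM2l.
Qed.

End Pay.

Section Pooling.
Variables (R : realType) (T : finType) (t t' : T).
Hypothesis neq_tt' : t != t'.

Definition pooled (x : T) : bool := (x == t) || (x == t').

(* Types t and t' send one of the signals t, t' uniformly at random; every
   other type reveals itself. *)
Definition pooling (s u : T) : R :=
  if pooled u then (pooled s)%:R / 2 else (s == u)%:R.

Lemma pooled_t : pooled t. Proof. by rewrite /pooled eqxx. Qed.
Lemma pooled_t' : pooled t'. Proof. by rewrite /pooled eqxx orbT. Qed.

Lemma sum_pooled (F : T -> R) : \sum_(u | pooled u) F u = F t + F t'.
Proof.
rewrite (bigD1 t) /pooled ?eqxx //= (bigD1 t') /= ?eqxx ?orbT 1?eq_sym //.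
rewrite big1 ?addr0 // => u.
by case: (u =P t) => [-> | _]; case: (u =P t').
Qed.

Lemma poolingC s u : pooling s u = pooling u s.
Proof.
rewrite /pooling eq_sym; case ps: (pooled s); case pu: (pooled u) => //.
all: by rewrite mul0r; case: eqP => // us; rewrite us ps in pu.
Qed.

Lemma sum_pooling_pooled s (G : T -> R) :
  pooled s -> \sum_u G u * pooling s u = (G t + G t') / 2.
Proof.
move=> ps; rewrite (bigID pooled) /= sum_pooled big1 => [|u /negbTE pu].
  by rewrite /pooling pooled_t pooled_t' ps addr0 /= mulr1n mulrDl !mul1r.
rewrite /pooling pu /=; case: eqP => [su | _]; last by rewrite mulr0.
by rewrite -su ps in pu.
Qed.

Lemma sum_pooling_revealing s (G : T -> R) :
  ~~ pooled s -> \sum_u G u * pooling s u = G s.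
Proof.
move=> nps; rewrite (bigID pooled) /= sum_pooled (bigD1 s) //=.
rewrite {1 2 3}/pooling pooled_t pooled_t' (negbTE nps) /=.
rewrite big1 => [|u /andP [/negbTE pu us]].
  by rewrite eqxx /= mulr1n mul0r !mulr0 mulr1 !add0r addr0.
by rewrite /pooling pu eq_sym (negbTE us) mulr0.
Qed.

Lemma pooling_signal_structure : signal_structure pooling.
Proof.
split.
- by move=> s u; rewrite /pooling; case: ifP => _; rewrite ?divr_ge0 ?ler0n.
- move=> u; under eq_bigr do rewrite poolingC -[pooling _ _]mul1r.
  have [pu | pu] := boolP (pooled u).
    by rewrite sum_pooling_pooled // -mulr2n divff ?pnatr_eq0.
  by rewrite sum_pooling_revealing.
- move=> s; have [ps | /negbTE ps] := boolP (pooled s).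
    by exists t; rewrite /pooling pooled_t ps divr_gt0 ?ltr0n.
  by exists s; rewrite /pooling ps eqxx ltr01.
Qed.

Lemma expected_value_pooled (q a : T -> R) s :
  (forall u, 0 < q u) -> pooled s ->
  expected_value pooling q s a = (q t * a t + q t' * a t') / (q t + q t').
Proof.
move=> q_gt0 ps; rewrite expected_valueE; under eq_bigr do rewrite mulrAC.
rewrite !sum_pooling_pooled //; field.
by rewrite lt0r_neq0 ?addr_gt0.
Qed.

Lemma expected_value_revealing (q a : T -> R) s :
  (forall u, 0 < q u) -> ~~ pooled s -> expected_value pooling q s a = a s.
Proof.
move=> q_gt0 nps; rewrite expected_valueE; under eq_bigr do rewrite mulrAC.
by rewrite !sum_pooling_revealing // [q s * _]mulrC mulfK ?lt0r_neq0.
Qed.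

End Pooling.

Theorem lemma1 (R : realType) (T : finType) (th : T -> R)
  (th_inj : injective th) (cardT : (2 <= #|T|)%N)
  (p q q' : T -> R)
  (hp : full_support_dist p) (hq : full_support_dist q)
  (hq' : full_support_dist q') :
  (LR_ge th q' q ->
     forall (S : finType) (pi : S -> T -> R), signal_structure pi ->
     forall A : seq (T -> R), monotone_firm th A ->
       avg_pay pi A p q' >= avg_pay pi A p q)
  /\
  (~ LR_ge th q' q ->
     exists (S : finType) (pi : S -> T -> R), signal_structure pi /\
     forall A : seq (T -> R), monotone_firm th A ->
       avg_pay pi A p q' < avg_pay pi A p q).
Proof.
case: hp => p_gt0 _; case: hq => q_gt0 _; case: hq' => q'_gt0 _.
have p_ge0 u : 0 <= p u by exact: ltW.
split=> [LRq S pi pi_signal A [A0 A_mono] | nLR].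
  have [pi_ge0 _ _] := pi_signal.
  apply: avg_pay_le => // s; apply: pay_le => // a aA.
  exact: expected_value_LR_le (A_mono a aA).
have [t [t' [lt_tt' lt_q]]] := not_LR_geP nLR.
have neq_tt' : t != t' by apply: contraTneq lt_tt' => ->; rewrite ltxx.
have pi_signal := pooling_signal_structure R neq_tt'.
have [pi_ge0 _ _] := pi_signal.
exists T, (pooling R t t'); split => // A [A0 A_mono].
have ev_pooled_lt s a : pooled t t' s -> monotone_task th a ->
    expected_value (pooling R t t') q' s a < expected_value (pooling R t t') q s a.
  move=> ps a_mono; rewrite !expected_value_pooled //.
  exact: two_point_mean_lt (a_mono _ _ lt_tt') lt_q.
apply: (avg_pay_lt (s0 := t) (t0 := t)) => //.
- move=> s; apply: pay_le => // a aA.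
  have [ps | nps] := boolP (pooled t t' s); first exact/ltW/ev_pooled_lt/A_mono.
  by rewrite !expected_value_revealing.
- by rewrite /pooling pooled_t divr_gt0 ?ltr0n.
- apply: pay_lt => // a aA.
  exact: ev_pooled_lt (pooled_t t t') (A_mono a aA).
Qed.
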